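(* Let $p$ be an odd prime, $n$ a positive integer, $d=\frac{p^n+1}{2}$ and $F(x)=x^d$ on $\mathrm{GF}(p^n)$. For every $c\in\mathrm{GF}(p^n)$ with $c\neq\pm1$, ${}_c\Delta_F\le 4$. Moreover, if $p^n\equiv1\pmod 4$ and $c\neq\pm1$ satisfies $\chi\big(\frac{1-c}{1+c}\big)=1$, then ${}_c\Delta_F\le 2$.
   Context: For a function $F:\mathrm{GF}(p^n)\to\mathrm{GF}(p^n)$ and $a,b,c\in\mathrm{GF}(p^n)$, let ${}_c\Delta_F(a,b)=\#\{x\in\mathrm{GF}(p^n): F(x+a)-cF(x)=b\}$. The $c$-differential uniformity of $F$ is ${}_c\Delta_F=\max\{{}_c\Delta_F(a,b): a,b\in\mathrm{GF}(p^n),\ \text{and } a\neq 0 \text{ if } c=1\}$. $\chi$ denotes the quadratic multiplicative character of $\mathrm{GF}(p^n)^*$ ($\chi(y)=1$ if $y$ is a nonzero square, $-1$ otherwise). *)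

From HB Require Import structures.
From mathcomp Require Import all_boot all_order all_algebra all_field.
Set Implicit Arguments. Unset Strict Implicit. Unset Printing Implicit Defensive.
Import GRing.Theory.
Local Open Scope ring_scope.

Definition cDelta (K : finFieldType) (f : K -> K) (c a b : K) : nat :=
  #|[set x : K | f (x + a) - c * f x == b]|.

Definition cDU (K : finFieldType) (f : K -> K) (c : K) : nat :=
  \max_(ab : K * K | (c != 1) || (ab.1 != 0)) cDelta f c ab.1 ab.2.

Definition chi (K : finFieldType) (y : K) : int :=
  if y == 0 then 0%R
  else if [exists z : K, z ^+ 2 == y] then 1%R else (-1)%R.

From mathcomp Require Import all_boot all_order all_algebra all_field.
From mathcomp Require Import ring.
Set Implicit Arguments. Unset Strict Implicit.
Import GRing.Theory.
Local Open Scope ring_scope.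

(* Write q = 2m + 1 and d = m + 1.  Since y^m = +-1 for y <> 0 (Euler's
   criterion), x^d = s(x) x with a sign s(x) = +-1.  Once the signs
   s(x + a) and s(x) are fixed, F(x + a) - c F(x) = b becomes a linear
   equation in x whose coefficient s(x + a) - c s(x) vanishes only for
   c = +-1, so each of the four sign patterns carries at most one solution.
   If moreover (1 - c)^m = (1 + c)^m, raising the linear equation to the
   m-th power shows that s(x) is determined by s(x + a), leaving two
   patterns. *)

Lemma subr_mul_sign_neq0 (K : idomainType) (s1 s2 c : K) :
  s1 ^+ 2 = 1 -> s2 ^+ 2 = 1 -> c ^+ 2 != 1 -> s1 - c * s2 != 0.
Proof.
move=> s1_sq s2_sq; apply: contra; rewrite subr_eq0 => /eqP s1E.
by rewrite -s1_sq s1E exprMn s2_sq mulr1.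
Qed.

Lemma chi_eq1_expr_half (K : finFieldType) (m : nat) (y : K) :
  #|K| = (m * 2).+1 -> chi y = 1 -> y ^+ m = 1.
Proof.
move=> cardK; rewrite /chi; have [//|y_neq0] := eqVneq y 0.
case: ifP => [/existsP [z /eqP z_sq] _|_ /eqP //]; subst y.
have z_neq0 : z != 0 by rewrite -sqrf_eq0.
by apply: (mulfI z_neq0); rewrite -exprM mulnC -exprS -cardK expf_card mulr1.
Qed.

Section OddOrderPower.

Variables (K : finFieldType) (m : nat).
Hypothesis cardK : #|K| = (m * 2).+1.

Lemma expr_half_sqr (y : K) : y != 0 -> (y ^+ m) ^+ 2 = 1.
Proof.
move=> y_neq0; apply: (mulfI y_neq0).
by rewrite -exprM -exprS -cardK expf_card mulr1.
Qed.

(* The value at 0 is irrelevant, since it only ever multiplies 0. *)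
Definition euler_sign (y : K) : K := if y ^+ m == -1 then -1 else 1.

Lemma euler_sign_sqr (y : K) : euler_sign y ^+ 2 = 1.
Proof. by rewrite /euler_sign; case: ifP; rewrite ?sqrrN expr1n. Qed.

Lemma exprS_euler_sign (y : K) : y ^+ m.+1 = euler_sign y * y.
Proof.
rewrite exprSr /euler_sign.
have [->|y_neq0] := eqVneq y 0; first by rewrite !mulr0.
move/eqP: (expr_half_sqr y_neq0); rewrite sqrf_eq1.
by case/orP=> /eqP ->; rewrite ?eqxx //; case: ifP => [/eqP <-|].
Qed.

Variables (c a b : K).

Lemma expS_diff_linear (x : K) : (x + a) ^+ m.+1 - c * x ^+ m.+1 = b ->
  (euler_sign (x + a) - c * euler_sign x) * x = b - euler_sign (x + a) * a.
Proof. by move=> <-; rewrite !exprS_euler_sign; ring. Qed.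

Hypothesis c_sq_neq1 : c ^+ 2 != 1.

Lemma expS_diff_sol_signs_inj (x y : K) :
  (x + a) ^+ m.+1 - c * x ^+ m.+1 = b -> (y + a) ^+ m.+1 - c * y ^+ m.+1 = b ->
  euler_sign (x + a) = euler_sign (y + a) -> euler_sign x = euler_sign y ->
  x = y.
Proof.
move=> /expS_diff_linear sol_x /expS_diff_linear sol_y Ea E.
have coef_neq0 : euler_sign (x + a) - c * euler_sign x != 0.
  by rewrite subr_mul_sign_neq0 ?euler_sign_sqr.
by apply: (mulfI coef_neq0); rewrite sol_x Ea E -sol_y.
Qed.

Lemma cDelta_expS_le4 : (cDelta (fun x : K => x ^+ m.+1) c a b <= 4)%N.
Proof.
pose signs x := ((x + a) ^+ m == -1, x ^+ m == -1).
have signs_inj :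
    {in [set x | (x + a) ^+ m.+1 - c * x ^+ m.+1 == b] &, injective signs}.
  move=> x y; rewrite !inE => /eqP sol_x /eqP sol_y [Ea E].
  by apply: expS_diff_sol_signs_inj; rewrite // /euler_sign ?Ea ?E.
by apply: leq_trans (leq_card_in _ _ signs_inj) _; rewrite card_prod card_bool.
Qed.

Hypothesis c_chi : (1 - c) ^+ m = (1 + c) ^+ m.

Lemma expr_half_sign_sub_mul (e s : K) : e ^+ 2 = 1 -> s ^+ 2 = 1 ->
  (e - c * s) ^+ m = e ^+ m * (1 - c) ^+ m.
Proof.
move=> e_sq s_sq; have -> : e - c * s = e * (1 - c * (s * e)).
  by rewrite mulrBr mulr1 [e * _]mulrC -!mulrA -expr2 e_sq mulr1.
have /eqP : (s * e) ^+ 2 = 1 by rewrite exprMn s_sq e_sq mulr1.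
rewrite sqrf_eq1 exprMn => /orP [] /eqP ->.
  by rewrite mulr1.
by rewrite mulrN1 opprK c_chi.
Qed.

Lemma expS_diff_sol_sign_eq (x y : K) :
  (x + a) ^+ m.+1 - c * x ^+ m.+1 = b -> (y + a) ^+ m.+1 - c * y ^+ m.+1 = b ->
  euler_sign (x + a) = euler_sign (y + a) -> euler_sign x = euler_sign y.
Proof.
move=> /expS_diff_linear sol_x /expS_diff_linear sol_y Ea.
set e := euler_sign (x + a) in sol_x Ea.
have k_neq0 : e ^+ m * (1 - c) ^+ m != 0.
  rewrite mulf_neq0 ?expf_neq0 //.
    by rewrite -sqrf_eq0 euler_sign_sqr oner_neq0.
  by apply: contraNneq c_sq_neq1 => /subr0_eq <-; rewrite expr1n.
have := congr1 (fun z => z ^+ m) sol_x; rewrite Ea -sol_y !exprMn.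
rewrite -Ea !expr_half_sign_sub_mul ?euler_sign_sqr // => /(mulfI k_neq0) E.
by rewrite /euler_sign E.
Qed.

Lemma cDelta_expS_le2 : (cDelta (fun x : K => x ^+ m.+1) c a b <= 2)%N.
Proof.
pose sign_shift x := (x + a) ^+ m == -1.
have sign_shift_inj :
    {in [set x | (x + a) ^+ m.+1 - c * x ^+ m.+1 == b] &, injective sign_shift}.
  move=> x y; rewrite !inE => /eqP sol_x /eqP sol_y Ea.
  have {}Ea : euler_sign (x + a) = euler_sign (y + a).
    by move: Ea; rewrite /euler_sign /sign_shift => ->.
  by apply: expS_diff_sol_signs_inj => //; apply: expS_diff_sol_sign_eq.
by apply: leq_trans (leq_card_in _ _ sign_shift_inj) _; rewrite card_bool.
Qed.

End OddOrderPower.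

Lemma cDU_leq (K : finFieldType) (f : K -> K) (c : K) (N : nat) :
  (forall a b, (cDelta f c a b <= N)%N) -> (cDU f c <= N)%N.
Proof. by move=> le_N; apply/bigmax_leqP => -[a b] _; apply: le_N. Qed.

Theorem theorem6 (p n : nat) (K : finFieldType)
  (hp : prime p) (hodd : odd p) (hn : (0 < n)%N)
  (hchar : p \in [pchar K]) (hcard : #|K| = (p ^ n)%N) :
  let d := ((p ^ n).+1 %/ 2)%N in
  let F := fun x : K => x ^+ d in
  (forall c : K, c != 1 -> c != -1 -> (cDU F c <= 4)%N) /\
  ((p ^ n %% 4 = 1)%N ->
    forall c : K, c != 1 -> c != -1 ->
      chi ((1 - c) / (1 + c)) = 1 -> (cDU F c <= 2)%N).
Proof.
move=> d F; set m := (p ^ n)./2.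
have q_eq : (p ^ n = (m * 2).+1)%N.
  by rewrite muln2 -{1}(odd_double_half (p ^ n)) oddX hodd orbT.
have -> : F = fun x => x ^+ m.+1.
  by rewrite /F /d {1}q_eq -[(_ * 2).+2]/(2 + _ * 2)%N -mulSn mulnK.
have cardK : #|K| = (m * 2).+1 by rewrite hcard.
split=> [c c_neq1 c_neqN1 | _ c c_neq1 c_neqN1 chi_c]; apply: cDU_leq => a b;
  have c_sq_neq1 : c ^+ 2 != 1 by rewrite sqrf_eq1 negb_or c_neq1.
  exact: cDelta_expS_le4.
apply: cDelta_expS_le2 => //.
have c1_neq0 : 1 + c != 0 by rewrite addrC addr_eq0.
by apply: divr1_eq; rewrite -expr_div_n (chi_eq1_expr_half cardK chi_c).
Qed.
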